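(* Let $\mathcal{U}$ be a finite set of users, $\mathcal{BS}$ a finite set of billboard slots with influence probabilities $Pr(bs,u)\in[0,1]$ for $bs\in\mathcal{BS}$, $u\in\mathcal{U}$, and $\mathcal{G}=(\mathcal{U},\mathcal{E},\mathcal{P})$ a directed social network with edge influence probabilities $\mathcal{P}:\mathcal{E}\to(0,1]$. Define, for $\mathbb{S}\subseteq\mathcal{BS}$ and $\mathcal{N}\subseteq\mathcal{U}$, $$\Phi(\mathbb{S},\mathcal{N})=\mathcal{I}(\mathbb{S})+\mathcal{I}_{\mathcal{G}}(\mathcal{N})+\Psi(\mathbb{S},\mathcal{N}),$$ where $\mathcal{I}(\mathbb{S})=\sum_{u\in\mathcal{U}}\bigl(1-\prod_{bs\in\mathbb{S}}(1-Pr(bs,u))\bigr)$, $\mathcal{I}_{\mathcal{G}}(\mathcal{N})$ is the expected number of activated nodes under the Independent Cascade model on $\mathcal{G}$ with seed set $\mathcal{N}$, and $$\Psi(\mathbb{S},\mathcal{N})=\sum_{u\in\mathcal{U}}\Bigl(1-\prod_{b\in\mathbb{S}}(1-Pr(u,b))\Bigr)\Bigl(1-\prod_{v\in\mathcal{N}}(1-Pr(u,v))\Bigr),$$ with $Pr(u,b)=Pr(b,u)$ and $Pr(u,v)$ the probability that user $u$ is activated by seed $v$. Then $\Phi$ is non-negative and monotone (in each argument), and $\Phi$ is non-bisubmodular (i.e., it is not bisubmodular in general).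
   Context: A user $u$ is influenced by billboard slot $bs$ (a billboard together with a display time interval) with probability $Pr(bs,u)$; in the paper's model $Pr(bs,u)=\mathrm{Size}(bs)/\max_{bs'}\mathrm{Size}(bs')$ when $u$'s trajectory (from a trajectory database of tuples $(u,\mathit{loc},[t_1,t_2])$) is at the billboard's location during a time interval overlapping the slot's display interval, and the slot does not influence $u$ otherwise. A bi-set function $\mathcal{F}$ on $2^{X_1}\times 2^{X_2}$ is monotone if $\mathcal{F}(A\cup\{a\},B)\ge\mathcal{F}(A,B)$ and $\mathcal{F}(A,B\cup\{b\})\ge\mathcal{F}(A,B)$ for all $A\subseteq X_1$, $B\subseteq X_2$, $a\in X_1\setminus A$, $b\in X_2\setminus B$. It is bisubmodular if for all $A\subseteq A'\subseteq X_1$, $B\subseteq B'\subseteq X_2$, $a\in X_1\setminus A'$, $b\in X_2\setminus B'$: $\mathcal{F}(A\cup\{a\},B)-\mathcal{F}(A,B)\ge\mathcal{F}(A'\cup\{a\},B')-\mathcal{F}(A',B')$ and $\mathcal{F}(A,B\cup\{b\})-\mathcal{F}(A,B)\ge\mathcal{F}(A',B'\cup\{b\})-\mathcal{F}(A',B')$. *)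

From HB Require Import structures.
From mathcomp Require Import all_boot all_order all_algebra.
Set Implicit Arguments. Unset Strict Implicit. Unset Printing Implicit Defensive.
Import Order.TTheory GRing.Theory Num.Theory.
Local Open Scope ring_scope.

Section Model.
Variables (R : realFieldType) (U BS : finType).

(* Independent Cascade model, live-edge formulation.  A live-edge world is a set L of
   ordered pairs; each edge is live independently with probability P,
   non-edges are never live. *)
Definition live_prob (E : rel U) (P : U -> U -> R) (L : {set U * U}) : R :=
  \prod_(x : U * U)
    (if E x.1 x.2 then (if x \in L then P x.1 x.2 else 1 - P x.1 x.2)
     else (if x \in L then 0 else 1)).

Definition live_rel (L : {set U * U}) : rel U := [rel x y | (x, y) \in L].

Definition activated (L : {set U * U}) (N : {set U}) : {set U} :=
  [set u | [exists v in N, connect (live_rel L) v u]].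

Definition IC_spread (E : rel U) (P : U -> U -> R) (N : {set U}) : R :=
  \sum_(L : {set U * U}) live_prob E P L * (#|activated L N|)%:R.

Definition act_prob (E : rel U) (P : U -> U -> R) (u v : U) : R :=
  \sum_(L : {set U * U}) live_prob E P L * (u \in activated L [set v])%:R.

Definition bb_influence (Pr : BS -> U -> R) (S : {set BS}) : R :=
  \sum_(u : U) (1 - \prod_(bs in S) (1 - Pr bs u)).

Definition Psi (Pr : BS -> U -> R) (E : rel U) (P : U -> U -> R)
    (S : {set BS}) (N : {set U}) : R :=
  \sum_(u : U) ((1 - \prod_(b in S) (1 - Pr b u)) *
                (1 - \prod_(v in N) (1 - act_prob E P u v))).

Definition Phi (Pr : BS -> U -> R) (E : rel U) (P : U -> U -> R)
    (S : {set BS}) (N : {set U}) : R :=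
  bb_influence Pr S + IC_spread E P N + Psi Pr E P S N.

End Model.

Definition bi_monotone (R : realFieldType) (X1 X2 : finType)
    (F : {set X1} -> {set X2} -> R) : Prop :=
  (forall (A : {set X1}) (B : {set X2}) (a : X1), a \notin A ->
      F A B <= F (a |: A) B) /\
  (forall (A : {set X1}) (B : {set X2}) (b : X2), b \notin B ->
      F A B <= F A (b |: B)).

Definition bisubmodular (R : realFieldType) (X1 X2 : finType)
    (F : {set X1} -> {set X2} -> R) : Prop :=
  forall (A A' : {set X1}) (B B' : {set X2}) (a : X1) (b : X2),
    A \subset A' -> B \subset B' -> a \notin A' -> b \notin B' ->
    F (a |: A) B - F A B >= F (a |: A') B' - F A' B' /\
    F A (b |: B) - F A B >= F A' (b |: B') - F A' B'.

(** Every summand of Phi is nonnegative and grows with both arguments: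
    the billboard terms and both factors of Psi are noisy-or
    probabilities [1 - prod (1 - p_i)] with [p_i] in [[0, 1]], and the spread
    only grows when seeds are added.  Bisubmodularity fails because
    Psi is a product: a slot [a] influencing a user [v] gains the extra
    amount [Psi {a} {v} > 0] once [v] is a seed, since every seed
    activates itself. *)

From mathcomp Require Import all_boot all_order all_algebra.
From mathcomp Require Import lra.
Set Implicit Arguments.
Unset Strict Implicit.
Unset Printing Implicit Defensive.
Import Order.TTheory GRing.Theory Num.Theory.
Local Open Scope ring_scope.

Lemma sum_set_prod (R : comPzSemiRingType) (T : finType) (f : T -> bool -> R) :
  \sum_(L : {set T}) \prod_x f x (x \in L) = \prod_x (f x true + f x false).
Proof.
under [RHS]eq_bigr do rewrite -big_bool.
rewrite bigA_distr_bigA (reindex (fun g : {ffun T -> bool} => [set x | g x])).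
  by apply: eq_bigr => g _; apply: eq_bigr => x _; rewrite inE.
exists (fun L : {set T} => [ffun x => x \in L]) => [g _ | L _].
  by apply/ffunP => x; rewrite ffunE inE.
by apply/setP => x; rewrite inE ffunE.
Qed.

Section NoisyOr.
Variables (R : numDomainType) (I : finType) (g : I -> R).
Hypothesis g01 : forall i, 0 <= g i <= 1.

Definition noisy_or (A : {set I}) : R := 1 - \prod_(i in A) (1 - g i).

Let compl01 i : 0 <= 1 - g i <= 1.
Proof. by have /andP[g0 g1] := g01 i; rewrite subr_ge0 g1 gerBl g0. Qed.

Let prod_compl_ge0 (A : {set I}) : 0 <= \prod_(i in A) (1 - g i).
Proof. by apply: prodr_ge0 => i _; case/andP: (compl01 i). Qed.

Lemma noisy_or_ge0 (A : {set I}) : 0 <= noisy_or A.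
Proof. by rewrite subr_ge0; apply: prodr_ile1 => i _; exact: compl01. Qed.

Lemma noisy_orS (A B : {set I}) : A \subset B -> noisy_or A <= noisy_or B.
Proof.
move=> sAB; rewrite /noisy_or [X in _ <= 1 - X](big_setID A) /=.
rewrite (setIidPr sAB); apply: lerB => //.
by apply: ler_piMr; [exact: prod_compl_ge0 | apply: prodr_ile1 => i _].
Qed.

Lemma noisy_or_set0 : noisy_or set0 = 0.
Proof. by rewrite /noisy_or big_set0 subrr. Qed.

Lemma noisy_or_set1 i : noisy_or [set i] = g i.
Proof. by rewrite /noisy_or big_set1 subKr. Qed.

End NoisyOr.

Section LiveEdge.
Variables (R : realFieldType) (U : finType) (E : rel U) (P : U -> U -> R).

Lemma sum_live_prob : \sum_(L : {set U * U}) live_prob E P L = 1.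
Proof.
pose f (x : U * U) (b : bool) : R :=
  if E x.1 x.2 then (if b then P x.1 x.2 else 1 - P x.1 x.2)
  else (if b then 0 else 1).
transitivity (\sum_(L : {set U * U}) \prod_x f x (x \in L)) => //.
rewrite sum_set_prod /f.
by apply: big1 => x _; case: (E x.1 x.2); rewrite ?add0r // addrC subrK.
Qed.

Lemma act_prob_self v : act_prob E P v v = 1.
Proof.
rewrite -sum_live_prob; apply: eq_bigr => L _.
suff -> : v \in activated L [set v] by rewrite mulr1.
by rewrite inE; apply/existsP; exists v; rewrite in_set1 eqxx connect0.
Qed.

Lemma activatedS L (N N' : {set U}) :
  N \subset N' -> activated L N \subset activated L N'.
Proof.
move=> sNN'; apply/subsetP => u; rewrite !inE => /existsP[v /andP[vN vu]].
by apply/existsP; exists v; rewrite (subsetP sNN').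
Qed.

Hypothesis P01 : forall x y, E x y -> 0 < P x y <= 1.

Lemma live_prob_ge0 L : 0 <= live_prob E P L.
Proof.
apply: prodr_ge0 => x _; case Exy: (E x.1 x.2); last by case: (x \in L).
have /andP[/ltW P0 P1] := P01 Exy.
by case: (x \in L); rewrite ?subr_ge0.
Qed.

Lemma act_prob01 u v : 0 <= act_prob E P u v <= 1.
Proof.
apply/andP; split.
  by apply: sumr_ge0 => L _; rewrite mulr_ge0 ?live_prob_ge0.
rewrite -sum_live_prob; apply: ler_sum => L _.
by rewrite ler_piMr ?live_prob_ge0 ?lern1 ?leq_b1.
Qed.

Lemma IC_spread_ge0 N : 0 <= IC_spread E P N.
Proof. by apply: sumr_ge0 => L _; rewrite mulr_ge0 ?live_prob_ge0. Qed.

Lemma IC_spreadS (N N' : {set U}) :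
  N \subset N' -> IC_spread E P N <= IC_spread E P N'.
Proof.
move=> sNN'; apply: ler_sum => L _.
by rewrite ler_wpM2l ?live_prob_ge0 // ler_nat subset_leq_card ?activatedS.
Qed.

End LiveEdge.

Section Phi.
Variables (R : realFieldType) (U BS : finType) (Pr : BS -> U -> R) (E : rel U)
  (P : U -> U -> R).
Hypothesis Pr01 : forall bs u, 0 <= Pr bs u <= 1.
Hypothesis P01 : forall x y, E x y -> 0 < P x y <= 1.

Let bb01 u := Pr01^~ u.
Let seed01 u := act_prob01 P01 u.

Lemma PsiE S N :
  Psi Pr E P S N = \sum_u noisy_or (Pr^~ u) S * noisy_or (act_prob E P u) N.
Proof. by []. Qed.

Lemma Psi_ge0 S N : 0 <= Psi Pr E P S N.
Proof.
apply: sumr_ge0 => u _.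
by rewrite mulr_ge0 ?(noisy_or_ge0 (bb01 u)) ?(noisy_or_ge0 (seed01 u)).
Qed.

Lemma Phi_ge0 S N : 0 <= Phi Pr E P S N.
Proof.
rewrite /Phi !addr_ge0 ?Psi_ge0 ?IC_spread_ge0 //.
by apply: sumr_ge0 => u _; exact: (noisy_or_ge0 (bb01 u)).
Qed.

Lemma bb_influenceS (S S' : {set BS}) :
  S \subset S' -> bb_influence Pr S <= bb_influence Pr S'.
Proof. by move=> sSS'; apply: ler_sum => u _; exact: (noisy_orS (bb01 u)). Qed.

Lemma PsiSl (S S' : {set BS}) N :
  S \subset S' -> Psi Pr E P S N <= Psi Pr E P S' N.
Proof.
move=> sSS'; apply: ler_sum => u _.
by rewrite ler_wpM2r ?(noisy_or_ge0 (seed01 u)) ?(noisy_orS (bb01 u)).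
Qed.

Lemma PsiSr S (N N' : {set U}) :
  N \subset N' -> Psi Pr E P S N <= Psi Pr E P S N'.
Proof.
move=> sNN'; apply: ler_sum => u _.
by rewrite ler_wpM2l ?(noisy_or_ge0 (bb01 u)) ?(noisy_orS (seed01 u)).
Qed.

Lemma Phi_bi_monotone : bi_monotone (Phi Pr E P).
Proof.
split=> [S N a _ | S N v _]; rewrite /Phi.
  by rewrite !lerD ?bb_influenceS ?PsiSl ?subsetUr.
by rewrite !lerD ?IC_spreadS ?PsiSr ?subsetUr.
Qed.

Lemma Psi_set0l N : Psi Pr E P set0 N = 0.
Proof.
by rewrite PsiE big1 // => u _; rewrite (noisy_or_set0 (Pr^~ u)) mul0r.
Qed.

Lemma Psi_set0r S : Psi Pr E P S set0 = 0.
Proof.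
by rewrite PsiE big1 // => u _; rewrite (noisy_or_set0 (act_prob E P u)) mulr0.
Qed.

Lemma Psi_set1 a v :
  Psi Pr E P [set a] [set v] = \sum_u Pr a u * act_prob E P u v.
Proof.
rewrite PsiE; apply: eq_bigr => u _.
by rewrite (noisy_or_set1 (Pr^~ u)) (noisy_or_set1 (act_prob E P u)).
Qed.

Lemma Pr_le_Psi_set1 a v : Pr a v <= Psi Pr E P [set a] [set v].
Proof.
rewrite Psi_set1 (bigD1 v) //= act_prob_self mulr1 lerDl.
apply: sumr_ge0 => u _.
by rewrite mulr_ge0 //; [case/andP: (Pr01 a u) | case/andP: (seed01 u v)].
Qed.

Lemma Phi_not_bisubmodular a v w :
  w != v -> 0 < Pr a v -> ~ bisubmodular (Phi Pr E P).
Proof.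
move=> wv Pav bisub; have w_notin_v : w \notin [set v] by rewrite in_set1.
have [gain _] := bisub set0 set0 set0 [set v] a w (sub0set _) (sub0set _)
  (negbT (in_set0 a)) w_notin_v.
move: gain; rewrite !setU0 /Phi !Psi_set0l !Psi_set0r.
have := Pr_le_Psi_set1 a v; lra.
Qed.

End Phi.

Theorem theorem6 (R : realFieldType) :
  (forall (U BS : finType) (Pr : BS -> U -> R) (E : rel U) (P : U -> U -> R),
     (forall bs u, 0 <= Pr bs u <= 1) ->
     (forall x y, E x y -> 0 < P x y <= 1) ->
     (forall S N, 0 <= Phi Pr E P S N) /\ bi_monotone (Phi Pr E P)) /\
  (exists (U BS : finType) (Pr : BS -> U -> R) (E : rel U) (P : U -> U -> R),
     (forall bs u, 0 <= Pr bs u <= 1) /\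
     (forall x y, E x y -> 0 < P x y <= 1) /\
     ~ bisubmodular (Phi Pr E P)).
Proof.
split=> [U BS Pr E P Pr01 P01 | ].
  by split; [exact: Phi_ge0 | exact: Phi_bi_monotone].
pose Pr (_ : unit) (_ : bool) : R := 1.
pose E : rel bool := fun _ _ => false.
have Pr01 bs u : 0 <= Pr bs u <= 1 by rewrite ler01 lexx.
pose P (_ _ : bool) : R := 1.
have P01 x y : E x y -> 0 < P x y <= 1 by [].
exists bool, unit, Pr, E, P; split=> //; split=> //.
by apply: (Phi_not_bisubmodular Pr01 P01 (a := tt) (v := true) (w := false)).
Qed.
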